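(* Let $\frac12<s<1$, $M\in\mathbb R\setminus\{0\}$, let $\gamma=\gamma(s)\ge\pi/2$ be the gap constant, and let $c\in(0,\gamma)\cup(\gamma,\infty)$. Let $$\mathcal V=\left\{\sqrt{3\left(\frac{\mu_n^1}{2\rho_n^{1/(2s)}}\right)^2+\rho_n^{1-\frac1s}}:\ n\ge1\right\}.$$ (a) If $c\notin\mathcal V$, then for each $N\ge1$ there is $\upsilon=\upsilon(N,c)>0$ such that $|\lambda_n^j-\lambda_m^k|\ge\upsilon$ for all $(n,j),(m,k)\in S$ with $(n,j)\ne(m,k)$, $1\le|n|,|m|\le N$ and $j,k\in\{2,3\}$. (b) If $c\in\mathcal V$, then there is a unique $n_c\ge1$ such that $\lambda_{-n_c}^2=\lambda_{n_c}^3$, and for each $N\ge1$ there is $\upsilon=\upsilon(N,c)>0$ such that $|\lambda_n^j-\lambda_m^k|\ge\upsilon$ for all $(n,j),(m,k)\in S$ with $(n,j)\neq(m,k)$, $1\le|n|,|m|\le N$, $j,k\in\{2,3\}$, except for the pair $\{(n,j),(m,k)\}=\{(-n_c,2),(n_c,3)\}$.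
   Context: $(-d_x^2)^s$ denotes the fractional Laplacian; $0<\rho_1\le\rho_2\le\cdots\to\infty$ are the eigenvalues (with multiplicity) of its realization on $L^2(-1,1)$ with zero exterior Dirichlet condition. Standing facts used for $\frac12<s<1$: the eigenvalues $\rho_n$ are simple, and there is a constant $\gamma=\gamma(s)\ge\pi/2$ such that $\rho_{n+1}^{1/(2s)}-\rho_n^{1/(2s)}\ge\gamma$ for all $n$ large enough. Fix $M\in\mathbb R\setminus\{0\}$. For $n\ge1$, $\mu_n^1$ is the unique real root of $\mu^3+\rho_n\mu-M\rho_n=0$ (it lies strictly between $0$ and $M$), $\mu_n^2=-\frac{\mu_n^1}{2}+i\sqrt{3(\mu_n^1/2)^2+\rho_n}$ and $\mu_n^3=\overline{\mu_n^2}$. For $c\in\mathbb R$, $\mathbb Z^*=\mathbb Z\setminus\{0\}$, $S=\{(n,j):n\in\mathbb Z^*,\ j\in\{1,2,3\}\}$ and $\lambda_n^j=\mu_{|n|}^j+i\,\mathrm{sgn}(n)\,c\,\rho_{|n|}^{1/(2s)}$ for $(n,j)\in S$. *)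

From Stdlib Require Import Reals Lra Lia ZArith Classical ClassicalEpsilon.
Open Scope R_scope.

(* Complex numbers represented as pairs (real part, imaginary part). *)
Definition cdist (a b : R * R) : R :=
  sqrt ((fst a - fst b) ^ 2 + (snd a - snd b) ^ 2).

(* mu_n^1 : the (unique) real root of  x^3 + rho_n x - M rho_n = 0. *)
Definition mu1 (rho : nat -> R) (M : R) (n : nat) : R :=
  epsilon (inhabits 0%R) (fun x => x ^ 3 + rho n * x - M * rho n = 0).

Definition muC (rho : nat -> R) (M : R) (n : nat) (j : nat) : R * R :=
  match j with
  | 1%nat => (mu1 rho M n, 0)
  | 2%nat => (- mu1 rho M n / 2, sqrt (3 * (mu1 rho M n / 2) ^ 2 + rho n))
  | _ => (- mu1 rho M n / 2, - sqrt (3 * (mu1 rho M n / 2) ^ 2 + rho n))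
  end.

(* lambda_n^j = mu_{|n|}^j + i sgn(n) c rho_{|n|}^{1/(2s)}, n in Z\{0}. *)
Definition lam (rho : nat -> R) (M s c : R) (n : Z) (j : nat) : R * R :=
  let m := Z.to_nat (Z.abs n) in
  (fst (muC rho M m j),
   snd (muC rho M m j) + IZR (Z.sgn n) * c * Rpower (rho m) (1 / (2 * s))).

Definition inV (rho : nat -> R) (M s c : R) : Prop :=
  exists n : nat, (1 <= n)%nat /\
    c = sqrt (3 * (mu1 rho M n / (2 * Rpower (rho n) (1 / (2 * s)))) ^ 2
              + Rpower (rho n) (1 - 1 / s)).

From Stdlib Require Import Reals Lra Lia ZArith Classical ClassicalEpsilon List.
Open Scope R_scope.

(* Writing p = |n|, the point lambda_n^j has real part -mu_p^1/2 and imaginary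
   part  +-muIm p + sgn(n) shift p,  where muIm p = sqrt(3 (mu_p^1/2)^2 + rho_p)
   and shift p = c rho_p^(1/(2s)) are both positive.
   - mu_p^1 is a root of x^3 + a x - M a with a = rho_p; such a root determines
     a (for M <> 0), and x^2/a strictly decreases in a.  As rho is strictly
     increasing, equal real parts force equal moduli |n| = |m|.
   - With equal moduli, two distinct labels collide only for the pair
     (-p, 2), (p, 3), and exactly when muIm p = shift p; this balance condition
     is equivalent to c belonging to the set V.
   - The balance condition reads 3/4 mu_p^2/rho_p + 1 = c^2 rho_p^(1/s - 1): the
     left side decreases and the right side increases with p (as s < 1), so at
     most one p is balanced.
   - On the finitely many labels with |n| <= N, every non-colliding pair is at
     positive distance, so a uniform positive lower bound exists. *)

Lemma cdist_pos (a b : R * R) : a <> b -> 0 < cdist a b.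
Proof.
  destruct a as [a1 a2], b as [b1 b2]; unfold cdist; simpl; intros Hne.
  apply sqrt_lt_R0.
  pose proof (pow2_ge_0 (a1 - b1)); pose proof (pow2_ge_0 (a2 - b2)).
  destruct (Rle_lt_or_eq_dec 0 ((a1 - b1) ^ 2 + (a2 - b2) ^ 2)) as [Hlt | Heq];
    [lra | lra | exfalso].
  destruct (Rplus_sqr_eq_0 (a1 - b1) (a2 - b2)) as [H1 H2].
  { unfold Rsqr; simpl in Heq; lra. }
  apply Hne; f_equal; lra.
Qed.

Lemma list_min_pos {X : Type} (L : list X) (Q : X -> Prop) (g : X -> R) :
  (forall x, In x L -> Q x -> 0 < g x) ->
  exists u, 0 < u /\ forall x, In x L -> Q x -> u <= g x.
Proof.
  induction L as [| a L IH]; intros Hg.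
  - exists 1; split; [lra | intros x []].
  - destruct IH as [u [Hu Hbound]].
    { intros x Hx HQ; apply Hg; simpl; auto. }
    destruct (classic (Q a)) as [Qa | nQa].
    + exists (Rmin u (g a)); split.
      * apply Rmin_pos; [exact Hu | apply Hg; simpl; auto].
      * intros x [<- | Hx] HQ; [apply Rmin_r |].
        eapply Rle_trans; [apply Rmin_l | auto].
    + exists u; split; [exact Hu |].
      intros x [<- | Hx] HQ; [contradiction | auto].
Qed.

Definition labels (N : nat) : list (Z * nat) :=
  list_prod (map (fun i => (Z.of_nat i - Z.of_nat N)%Z) (seq 0 (2 * N + 1)))
            (2%nat :: 3%nat :: nil).

Lemma labels_complete (N : nat) (n : Z) (j : nat) :
  (Z.abs n <= Z.of_nat N)%Z -> (j = 2%nat \/ j = 3%nat) -> In (n, j) (labels N).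
Proof.
  intros Hn Hj; apply in_prod_iff; split.
  - apply in_map_iff; exists (Z.to_nat (n + Z.of_nat N)); split; [lia |].
    apply in_seq; lia.
  - simpl; destruct Hj; auto.
Qed.

Lemma uniform_separation (z : Z -> nat -> R * R)
  (Q : Z -> nat -> Z -> nat -> Prop) (N : nat) :
  (forall n m j k, (j = 2%nat \/ j = 3%nat) -> (k = 2%nat \/ k = 3%nat) ->
     Q n j m k -> z n j <> z m k) ->
  exists ups, 0 < ups /\
    forall n m j k, (Z.abs n <= Z.of_nat N)%Z -> (Z.abs m <= Z.of_nat N)%Z ->
      (j = 2%nat \/ j = 3%nat) -> (k = 2%nat \/ k = 3%nat) ->
      Q n j m k -> ups <= cdist (z n j) (z m k).
Proof.
  intros Hsep.
  set (Qpair := fun x : (Z * nat) * (Z * nat) =>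
    (snd (fst x) = 2%nat \/ snd (fst x) = 3%nat) /\
    (snd (snd x) = 2%nat \/ snd (snd x) = 3%nat) /\
    Q (fst (fst x)) (snd (fst x)) (fst (snd x)) (snd (snd x))).
  destruct (list_min_pos (list_prod (labels N) (labels N)) Qpair
    (fun x => cdist (z (fst (fst x)) (snd (fst x))) (z (fst (snd x)) (snd (snd x)))))
    as [ups [Hups Hbound]].
  - intros [[n j] [m k]] _ (Hj & Hk & HQ); apply cdist_pos, Hsep; auto.
  - exists ups; split; [exact Hups |].
    intros n m j k Hn Hm Hj Hk HQ.
    apply (Hbound ((n, j), (m, k))); [| unfold Qpair; simpl; auto].
    apply in_prod_iff; split; apply labels_complete; auto.
Qed.

(* The cubic x^3 + a x - M a (a > 0) has a real root, by the intermediate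
   value theorem; this makes mu^1 well defined. *)
Lemma cubic_root_exists (a M : R) : 0 < a -> exists x, x ^ 3 + a * x - M * a = 0.
Proof.
  intros Ha.
  set (L := Rabs M + 1).
  assert (HL : - L < M < L /\ 0 < L)
    by (unfold L; pose proof (Rabs_pos M); split_Rabs; lra).
  destruct (IVT (fun x => x ^ 3 + a * x - M * a) (- L) L) as [z [_ Hz]].
  - intro; reg.
  - lra.
  - simpl; nra.
  - simpl; nra.
  - exists z; exact Hz.
Qed.

(* For a root x, the ratio u = x^2/a satisfies u (u + 1)^2 a = M^2, since
   x (x^2 + a) = M a. *)
Lemma cubic_root_invariant (a M x : R) : 0 < a -> x ^ 3 + a * x - M * a = 0 ->
  x ^ 2 / a * (x ^ 2 / a + 1) ^ 2 * a = M ^ 2.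
Proof.
  intros Ha Hx.
  assert (Hfac : x * (x ^ 2 + a) = M * a) by lra.
  replace (M ^ 2) with ((M * a) ^ 2 / a ^ 2) by (field; lra).
  rewrite <- Hfac; field; lra.
Qed.

(* Hence the ratio x^2/a strictly decreases as a increases, because
   t |-> t (t + 1)^2 is increasing on [0, +oo). *)
Lemma cubic_root_ratio_decreasing (a b M x y : R) : M <> 0 -> 0 < a < b ->
  x ^ 3 + a * x - M * a = 0 -> y ^ 3 + b * y - M * b = 0 ->
  y ^ 2 / b < x ^ 2 / a.
Proof.
  intros HM Hab Hx Hy.
  pose proof (cubic_root_invariant a M x ltac:(lra) Hx) as Hu.
  pose proof (cubic_root_invariant b M y ltac:(lra) Hy) as Hv.
  set (u := x ^ 2 / a) in *. set (v := y ^ 2 / b) in *.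
  assert (Hu0 : 0 <= u)
    by (unfold u; apply Rmult_le_pos; [apply pow2_ge_0 | left; apply Rinv_0_lt_compat; lra]).
  assert (Hv0 : 0 <= v)
    by (unfold v; apply Rmult_le_pos; [apply pow2_ge_0 | left; apply Rinv_0_lt_compat; lra]).
  assert (HM2 : 0 < M ^ 2) by (rewrite <- Rsqr_pow2; apply Rsqr_pos_lt, HM).
  destruct (Rlt_or_le v u) as [Hlt | Hle]; [exact Hlt | exfalso].
  assert (Hg : u * (u + 1) ^ 2 <= v * (v + 1) ^ 2).
  { replace (v * (v + 1) ^ 2) with
      (u * (u + 1) ^ 2 + (v - u) * (v ^ 2 + u * v + u ^ 2 + 2 * (u + v) + 1)) by ring.
    assert (0 <= (v - u) * (v ^ 2 + u * v + u ^ 2 + 2 * (u + v) + 1)) by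
      (apply Rmult_le_pos; simpl; nra).
    lra. }
  assert (Hvpos : 0 < v * (v + 1) ^ 2) by nra.
  nra.
Qed.

(* For M <> 0 a root x determines a: otherwise x = M and M^3 = 0. *)
Lemma cubic_root_injective (a b M x : R) : M <> 0 ->
  x ^ 3 + a * x - M * a = 0 -> x ^ 3 + b * x - M * b = 0 -> a = b.
Proof.
  intros HM Ha Hb.
  assert (Hprod : (a - b) * (x - M) = 0) by lra.
  destruct (Rmult_integral _ _ Hprod) as [H | H]; [lra | exfalso].
  assert (x = M) by lra; subst x.
  apply (pow_nonzero M 3 HM); lra.
Qed.

Section Spectrum.

Variables (rho : nat -> R) (M s c : R).
Hypothesis HM : M <> 0.
Hypothesis Hpos : forall n : nat, (1 <= n)%nat -> 0 < rho n.
Hypothesis Hsimple : forall n : nat, (1 <= n)%nat -> rho n < rho (S n).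
Hypothesis Hs : 1 / 2 < s < 1.
Hypothesis Hc : 0 < c.

Definition muIm (p : nat) : R := sqrt (3 * (mu1 rho M p / 2) ^ 2 + rho p).

Definition shift (p : nat) : R := c * Rpower (rho p) (1 / (2 * s)).

Definition branch (j : nat) : R := if Nat.eqb j 2 then 1 else -1.

Lemma mu1_root (p : nat) : (1 <= p)%nat ->
  mu1 rho M p ^ 3 + rho p * mu1 rho M p - M * rho p = 0.
Proof.
  intros Hp; unfold mu1; apply epsilon_spec, cubic_root_exists, Hpos, Hp.
Qed.

Lemma rho_increasing (p q : nat) : (1 <= p)%nat -> (p < q)%nat -> rho p < rho q.
Proof.
  intros Hp Hpq; induction Hpq as [| q Hpq IH].
  - apply Hsimple, Hp.
  - eapply Rlt_trans; [exact IH | apply Hsimple; lia].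
Qed.

Lemma mu1_injective (p q : nat) : (1 <= p)%nat -> (1 <= q)%nat ->
  mu1 rho M p = mu1 rho M q -> p = q.
Proof.
  intros Hp Hq Heq.
  assert (Hrho : rho p = rho q).
  { apply (cubic_root_injective _ _ M (mu1 rho M q) HM);
      [rewrite <- Heq |]; apply mu1_root; assumption. }
  destruct (Nat.lt_trichotomy p q) as [Hlt | [Hpq | Hlt]]; [| exact Hpq |];
    [pose proof (rho_increasing p q Hp Hlt) | pose proof (rho_increasing q p Hq Hlt)]; lra.
Qed.

Lemma muIm_sq (p : nat) : (1 <= p)%nat -> muIm p ^ 2 = 3 * (mu1 rho M p / 2) ^ 2 + rho p.
Proof.
  intros Hp; unfold muIm; rewrite <- Rsqr_pow2; apply Rsqr_sqrt.
  pose proof (pow2_ge_0 (mu1 rho M p / 2)); pose proof (Hpos p Hp); lra.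
Qed.

Lemma muIm_pos (p : nat) : (1 <= p)%nat -> 0 < muIm p.
Proof.
  intros Hp; unfold muIm; apply sqrt_lt_R0.
  pose proof (pow2_ge_0 (mu1 rho M p / 2)); pose proof (Hpos p Hp); lra.
Qed.

Lemma shift_pos (p : nat) : 0 < shift p.
Proof. unfold shift, Rpower; apply Rmult_lt_0_compat; [exact Hc | apply exp_pos]. Qed.

Lemma lam_branch (n : Z) (j : nat) : (j = 2%nat \/ j = 3%nat) ->
  lam rho M s c n j =
  (- mu1 rho M (Z.to_nat (Z.abs n)) / 2,
   branch j * muIm (Z.to_nat (Z.abs n)) + IZR (Z.sgn n) * shift (Z.to_nat (Z.abs n))).
Proof.
  intros [-> | ->]; unfold lam, muIm, shift, branch; simpl; f_equal; ring.
Qed.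

Lemma lam_collision (n m : Z) (j k : nat) :
  n <> 0%Z -> m <> 0%Z -> (j = 2%nat \/ j = 3%nat) -> (k = 2%nat \/ k = 3%nat) ->
  (n, j) <> (m, k) -> lam rho M s c n j = lam rho M s c m k ->
  exists p, (1 <= p)%nat /\
    (((n, j) = ((- Z.of_nat p)%Z, 2%nat) /\ (m, k) = (Z.of_nat p, 3%nat)) \/
     ((n, j) = (Z.of_nat p, 3%nat) /\ (m, k) = ((- Z.of_nat p)%Z, 2%nat))) /\
    muIm p = shift p.
Proof.
  intros Hn0 Hm0 Hj Hk Hne E.
  rewrite (lam_branch n j Hj), (lam_branch m k Hk) in E.
  injection E as Ere Eim.
  assert (Hn : (n = Z.of_nat (Z.to_nat (Z.abs n)) /\ Z.sgn n = 1 \/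
                n = - Z.of_nat (Z.to_nat (Z.abs n)) /\ Z.sgn n = -1)%Z) by lia.
  assert (Hm : (m = Z.of_nat (Z.to_nat (Z.abs m)) /\ Z.sgn m = 1 \/
                m = - Z.of_nat (Z.to_nat (Z.abs m)) /\ Z.sgn m = -1)%Z) by lia.
  assert (Hp : (1 <= Z.to_nat (Z.abs n))%nat) by lia.
  assert (Hpq : Z.to_nat (Z.abs n) = Z.to_nat (Z.abs m))
    by (apply mu1_injective; [exact Hp | lia | lra]).
  rewrite <- Hpq in Hm, Eim.
  set (p := Z.to_nat (Z.abs n)) in *; clearbody p.
  pose proof (muIm_pos p Hp); pose proof (shift_pos p).
  (* Equal imaginary parts [+-muIm p +- shift p]: as both terms are positive,
     either the labels coincide or the exceptional pair occurs with muIm p = shift p. *)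
  exists p; split; [exact Hp |].
  destruct Hj as [-> | ->], Hk as [-> | ->];
    destruct Hn as [[-> Sn] | [-> Sn]], Hm as [[-> Sm] | [-> Sm]];
    rewrite ?Sn, ?Sm in Eim; unfold branch in Eim; simpl in Eim;
    try (exfalso; apply Hne; reflexivity); try (exfalso; lra);
    split; [left | | right |]; auto; lra.
Qed.

Lemma Rpower_half_sq (r : R) : 0 < r ->
  Rpower r (1 / (2 * s)) * Rpower r (1 / (2 * s)) = Rpower r (1 / s).
Proof. intros Hr; rewrite <- Rpower_plus; f_equal; field; lra. Qed.

Lemma V_element_eq (p : nat) : (1 <= p)%nat ->
  sqrt (3 * (mu1 rho M p / (2 * Rpower (rho p) (1 / (2 * s)))) ^ 2
        + Rpower (rho p) (1 - 1 / s)) = muIm p / Rpower (rho p) (1 / (2 * s)).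
Proof.
  intros Hp.
  pose proof (Hpos p Hp) as Hr.
  pose proof (Rpower_half_sq (rho p) Hr) as HP2.
  set (P := Rpower (rho p) (1 / (2 * s))) in *.
  assert (HP : 0 < P) by (unfold P, Rpower; apply exp_pos).
  assert (Hrest : Rpower (rho p) (1 - 1 / s) = rho p / (P * P)).
  { rewrite HP2; apply (Rmult_eq_reg_r (Rpower (rho p) (1 / s)));
      [| unfold Rpower; apply Rgt_not_eq, exp_pos].
    rewrite <- Rpower_plus, <- HP2.
    replace (1 - 1 / s + 1 / s) with 1 by ring; rewrite Rpower_1 by exact Hr.
    field; lra. }
  rewrite Hrest.
  replace (3 * (mu1 rho M p / (2 * P)) ^ 2 + rho p / (P * P))
    with (muIm p ^ 2 / (P * P)) by (rewrite (muIm_sq p Hp); field; lra).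
  replace (muIm p ^ 2 / (P * P)) with ((muIm p / P) ^ 2) by (field; lra).
  apply sqrt_pow2, Rlt_le, Rdiv_lt_0_compat; [apply muIm_pos, Hp | exact HP].
Qed.

Lemma inV_balance : inV rho M s c <-> exists p, (1 <= p)%nat /\ muIm p = shift p.
Proof.
  assert (HP : forall p, 0 < Rpower (rho p) (1 / (2 * s)))
    by (intros; unfold Rpower; apply exp_pos).
  unfold inV, shift; split; intros [p [Hp E]]; exists p; split; auto;
    [rewrite V_element_eq in E by exact Hp | rewrite V_element_eq by exact Hp];
    rewrite E; field; apply Rgt_not_eq, HP.
Qed.

(* Balance, squared and divided by rho_p, separates the dependence on mu and
   on rho. *)
Lemma balance_equation (p : nat) : (1 <= p)%nat -> muIm p = shift p ->
  3 / 4 * (mu1 rho M p ^ 2 / rho p) + 1 = c ^ 2 * Rpower (rho p) (1 / s - 1).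
Proof.
  intros Hp E.
  pose proof (Hpos p Hp) as Hr.
  assert (Hsq : 3 * (mu1 rho M p / 2) ^ 2 + rho p
                = c ^ 2 * (rho p * Rpower (rho p) (1 / s - 1))).
  { rewrite <- (muIm_sq p Hp), E; unfold shift.
    rewrite <- (Rpower_1 (rho p)) at 2 by exact Hr.
    rewrite <- Rpower_plus.
    replace (1 + (1 / s - 1)) with (1 / s) by ring.
    rewrite <- (Rpower_half_sq (rho p) Hr); ring. }
  apply (Rmult_eq_reg_r (rho p)); [| lra].
  replace ((3 / 4 * (mu1 rho M p ^ 2 / rho p) + 1) * rho p)
    with (3 * (mu1 rho M p / 2) ^ 2 + rho p) by (field; lra).
  rewrite Hsq; ring.
Qed.

Lemma balance_unique (p q : nat) : (1 <= p)%nat -> (1 <= q)%nat ->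
  muIm p = shift p -> muIm q = shift q -> p = q.
Proof.
  assert (Hord : forall p q, (1 <= p)%nat -> (p < q)%nat ->
            muIm p = shift p -> muIm q = shift q -> False).
  { clear p q; intros p q Hp Hpq Ep Eq.
    assert (Hq : (1 <= q)%nat) by lia.
    pose proof (rho_increasing p q Hp Hpq) as Hr.
    pose proof (Hpos p Hp) as Hrp.
    (* The left side of the balance equation strictly decreases with rho ... *)
    pose proof (cubic_root_ratio_decreasing (rho p) (rho q) M _ _ HM
                  (conj Hrp Hr) (mu1_root p Hp) (mu1_root q Hq)) as Hratio.
    (* ... while the right side strictly increases, since 1/s - 1 > 0. *)
    assert (He : 0 < 1 / s - 1).
    { enough (1 < 1 / s) by lra.
      unfold Rdiv; rewrite Rmult_1_l, <- Rinv_1; apply Rinv_lt_contravar; lra. }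
    pose proof (Rlt_Rpower_l (rho p) (rho q) _ He (conj Hrp Hr)) as Hpow.
    apply balance_equation in Ep; [| exact Hp].
    apply balance_equation in Eq; [| exact Hq].
    assert (0 < c ^ 2) by (simpl; nra).
    nra. }
  intros Hp Hq Ep Eq.
  destruct (Nat.lt_trichotomy p q) as [Hlt | [Heq | Hlt]]; [exfalso | exact Heq | exfalso];
    eauto.
Qed.

Lemma exceptional_coincidence (p : nat) : (1 <= p)%nat ->
  (lam rho M s c (- Z.of_nat p)%Z 2 = lam rho M s c (Z.of_nat p) 3 <-> muIm p = shift p).
Proof.
  intros Hp.
  rewrite (lam_branch _ 2 (or_introl eq_refl)), (lam_branch _ 3 (or_intror eq_refl)).
  replace (Z.to_nat (Z.abs (- Z.of_nat p))) with p by lia.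
  replace (Z.to_nat (Z.abs (Z.of_nat p))) with p by lia.
  replace (Z.sgn (- Z.of_nat p)) with (-1)%Z by lia.
  replace (Z.sgn (Z.of_nat p)) with 1%Z by lia.
  unfold branch; simpl; split.
  - intros E; injection E as E; lra.
  - intros E; f_equal; lra.
Qed.

End Spectrum.

Theorem lemma3p8
  (s M gamma c : R) (rho : nat -> R)
  (Hs : 1 / 2 < s < 1)
  (HM : M <> 0)
  (Hpos : forall n : nat, (1 <= n)%nat -> 0 < rho n)
  (Hsimple : forall n : nat, (1 <= n)%nat -> rho n < rho (S n))
  (Hinf : forall K : R, exists n : nat, (1 <= n)%nat /\ K < rho n)
  (Hgamma : PI / 2 <= gamma)
  (Hgap : exists n0 : nat, forall n : nat, (n0 <= n)%nat -> (1 <= n)%nat ->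
            Rpower (rho (S n)) (1 / (2 * s)) - Rpower (rho n) (1 / (2 * s)) >= gamma)
  (Hc : 0 < c /\ c <> gamma) :
  (~ inV rho M s c ->
   forall N : nat, (1 <= N)%nat ->
   exists ups : R, 0 < ups /\
     forall (n m : Z) (j k : nat),
       n <> 0%Z -> m <> 0%Z ->
       (Z.abs n <= Z.of_nat N)%Z -> (Z.abs m <= Z.of_nat N)%Z ->
       (j = 2%nat \/ j = 3%nat) -> (k = 2%nat \/ k = 3%nat) ->
       (n, j) <> (m, k) ->
       ups <= cdist (lam rho M s c n j) (lam rho M s c m k))
  /\
  (inV rho M s c ->
   exists nc : nat,
     ((1 <= nc)%nat /\
      lam rho M s c (- Z.of_nat nc)%Z 2 = lam rho M s c (Z.of_nat nc) 3 /\
      (forall nc' : nat, (1 <= nc')%nat ->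
         lam rho M s c (- Z.of_nat nc')%Z 2 = lam rho M s c (Z.of_nat nc') 3 ->
         nc' = nc)) /\
     forall N : nat, (1 <= N)%nat ->
     exists ups : R, 0 < ups /\
       forall (n m : Z) (j k : nat),
         n <> 0%Z -> m <> 0%Z ->
         (Z.abs n <= Z.of_nat N)%Z -> (Z.abs m <= Z.of_nat N)%Z ->
         (j = 2%nat \/ j = 3%nat) -> (k = 2%nat \/ k = 3%nat) ->
         (n, j) <> (m, k) ->
         ~ (((n, j) = ((- Z.of_nat nc)%Z, 2%nat) /\ (m, k) = (Z.of_nat nc, 3%nat)) \/
            ((n, j) = (Z.of_nat nc, 3%nat) /\ (m, k) = ((- Z.of_nat nc)%Z, 2%nat))) ->
         ups <= cdist (lam rho M s c n j) (lam rho M s c m k)).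
Proof.
  destruct Hc as [Hc0 _].
  pose proof (lam_collision rho M s c HM Hpos Hsimple Hc0) as Hcollision.
  pose proof (balance_unique rho M s c HM Hpos Hsimple Hs Hc0) as Hunique.
  split.
  -
    intros HnotV N _.
    destruct (uniform_separation (lam rho M s c)
      (fun n j m k => n <> 0%Z /\ m <> 0%Z /\ (n, j) <> (m, k)) N)
      as [ups [Hups Hbound]].
    { intros n m j k Hj Hk (Hn & Hm & Hne) E.
      destruct (Hcollision n m j k Hn Hm Hj Hk Hne E) as [p [Hp [_ Hbal]]].
      apply HnotV, (inV_balance rho M s c Hpos Hs); eauto. }
    exists ups; split; [exact Hups | intros; apply Hbound; auto].
  -
    intros HV.
    destruct (proj1 (inV_balance rho M s c Hpos Hs) HV) as [nc [Hnc Hbal]].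
    exists nc; split; [split; [exact Hnc | split] |].
    + apply exceptional_coincidence; assumption.
    + intros nc' Hnc' E; apply Hunique; [exact Hnc' | exact Hnc | | exact Hbal].
      apply (exceptional_coincidence rho M s c nc' Hnc'), E.
    + intros N _.
      destruct (uniform_separation (lam rho M s c)
        (fun n j m k => n <> 0%Z /\ m <> 0%Z /\ (n, j) <> (m, k) /\
           ~ (((n, j) = ((- Z.of_nat nc)%Z, 2%nat) /\ (m, k) = (Z.of_nat nc, 3%nat)) \/
              ((n, j) = (Z.of_nat nc, 3%nat) /\ (m, k) = ((- Z.of_nat nc)%Z, 2%nat)))) N)
        as [ups [Hups Hbound]].
      { intros n m j k Hj Hk (Hn & Hm & Hne & Hexc) E.
        destruct (Hcollision n m j k Hn Hm Hj Hk Hne E) as [p [Hp [Hpair Hbal']]].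
        assert (p = nc) as -> by (apply Hunique; assumption).
        exact (Hexc Hpair). }
      exists ups; split; [exact Hups | intros; apply Hbound; auto].
Qed.
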